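(* Let $r_1=1/4$, $r_n=\frac1{2n}$ for $n\ge2$, and $p_n=\frac12+r_n$, $q_n=1-p_n$, $\rho_n=q_n/p_n$ for $n\ge1$. Then for every $\varepsilon>0$ there exists $i_0>0$ such that $$(1-\varepsilon)\frac{i(j-i)}{j}\le D(i,j)\le(1+\varepsilon)\frac{i(j-i)}{j}\quad\text{for all }j>i\ge i_0,$$ $$(1-\varepsilon)i\le D(i)\le(1+\varepsilon)i\quad\text{for all }i\ge i_0.$$
   Context: For integers $n\ge m\ge0$ let $D(m,n)=0$ if $n=m$, $D(m,n)=1$ if $n=m+1$, and $D(m,n)=1+\sum_{j=1}^{n-m-1}\rho_{m+1}\cdots\rho_{m+j}$ if $n\ge m+2$; let $D(m)=\lim_{n\to\infty}D(m,n)$. *)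

From Stdlib Require Import Reals Lra Lia.
From Coquelicot Require Import Coquelicot.
Open Scope R_scope.

Definition r (n : nat) : R := if (n <=? 1)%nat then 1/4 else 1 / (2 * INR n).
Definition p (n : nat) : R := 1/2 + r n.
Definition q (n : nat) : R := 1 - p n.
Definition rho (n : nat) : R := q n / p n.

Fixpoint prod_rho (m j : nat) : R :=
  match j with
  | O => 1
  | S j' => prod_rho m j' * rho (m + S j')
  end.

Fixpoint sum_prod (m N : nat) : R :=
  match N with
  | O => 0
  | S N' => sum_prod m N' + prod_rho m (S N')
  end.

(* D(m,n) for n >= m: 0 if n = m, and 1 + sum_{j=1}^{n-m-1} ... otherwise
   (for n = m+1 the sum is empty, giving 1). Value for n < m is irrelevant (0). *)
Definition Dmn (m n : nat) : R :=
  if (n <=? m)%nat then 0 else 1 + sum_prod m (n - m - 1).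

Definition Dlim (m : nat) : Rbar := Lim_seq (fun n => Dmn m n).

(* The theorem follows from exact closed forms.  For k >= 2 one has
   rho_k = (k-1)/(k+1), so for m >= 1 the products telescope:
     rho_{m+1} ... rho_{m+j} = m(m+1) / ((m+j)(m+j+1)),
   and the partial sums telescope as well, because
     m(m+1)/((m+j)(m+j+1)) = m(m+1) (1/(m+j) - 1/(m+j+1)).
   This gives, for 1 <= m < n,
     D(m,n) = (m+1)(n-m)/n   and hence   D(m) = m+1.
   So D(i,j) and D(i) are exactly (1 + 1/i) times the comparison quantities
   i(j-i)/j and i; choosing i0 with 1/i0 <= eps finishes the proof. *)

From Stdlib Require Import Reals Lra Lia.
From Coquelicot Require Import Coquelicot.
Local Open Scope R_scope.

Lemma INR_ge_1 (m : nat) : (1 <= m)%nat -> 1 <= INR m.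
Proof. intros Hm. apply (le_INR 1); exact Hm. Qed.

Lemma rho_closed (k : nat) : (2 <= k)%nat -> rho k = (INR k - 1) / (INR k + 1).
Proof.
  intros Hk. unfold rho, q, p, r.
  destruct (Nat.leb_spec k 1) as [Hle | _]; [lia |].
  assert (H2 : 2 <= INR k) by (apply (le_INR 2); exact Hk).
  field; lra.
Qed.

Lemma prod_rho_closed (m j : nat) : (1 <= m)%nat ->
  prod_rho m j = INR m * (INR m + 1) / (INR (m + j) * (INR (m + j) + 1)).
Proof.
  intros Hm. pose proof (INR_ge_1 m Hm) as Hm1.
  induction j as [| j IH]; simpl prod_rho.
  - rewrite Nat.add_0_r. field. lra.
  - rewrite IH, rho_closed by lia. rewrite !plus_INR, !S_INR.
    pose proof (pos_INR j). field. lra.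
Qed.

Lemma sum_prod_closed (m N : nat) : (1 <= m)%nat ->
  1 + sum_prod m N = (INR m + 1) * (INR N + 1) / (INR m + INR N + 1).
Proof.
  intros Hm. pose proof (INR_ge_1 m Hm) as Hm1.
  induction N as [| N IH].
  - simpl. field. lra.
  - change (sum_prod m (S N)) with (sum_prod m N + prod_rho m (S N)).
    rewrite <- Rplus_assoc, IH, prod_rho_closed by exact Hm.
    rewrite !plus_INR, !S_INR. pose proof (pos_INR N). field. lra.
Qed.

Lemma Dmn_closed (m n : nat) : (1 <= m)%nat -> (m < n)%nat ->
  Dmn m n = (INR m + 1) * (INR n - INR m) / INR n.
Proof.
  intros Hm Hn. unfold Dmn.
  destruct (Nat.leb_spec n m) as [Hle | _]; [lia |].
  rewrite sum_prod_closed by exact Hm.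
  assert (Hsub : INR (n - m - 1) = INR n - INR m - 1).
  { rewrite !minus_INR by lia. simpl. ring. }
  rewrite Hsub.
  assert (INR m < INR n) by (apply lt_INR; exact Hn).
  pose proof (INR_ge_1 m Hm). field. lra.
Qed.

(* Letting n -> oo in D(m,n) = (m+1) - (m+1) m / n gives D(m) = m+1. *)
Lemma Dlim_closed (m : nat) : (1 <= m)%nat -> Dlim m = Finite (INR m + 1).
Proof.
  intros Hm. unfold Dlim. apply is_lim_seq_unique.
  apply is_lim_seq_ext_loc
    with (u := fun n => (INR m + 1) - (INR m + 1) * INR m * / INR n).
  - exists (S m). intros n Hn. rewrite Dmn_closed by lia.
    assert (0 < INR n) by (apply lt_0_INR; lia). field. lra.
  - replace (INR m + 1) with ((INR m + 1) - (INR m + 1) * INR m * 0) at 1 by ring.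
    apply is_lim_seq_minus'; [apply is_lim_seq_const |].
    apply (is_lim_seq_scal_l _ _ (Rbar_inv p_infty)).
    apply is_lim_seq_inv; [apply is_lim_seq_INR | discriminate].
Qed.

Lemma succ_mult_within (eps x y : R) : 0 < x -> 1 <= eps * x -> 0 <= y ->
  (1 - eps) * (x * y) <= (x + 1) * y /\ (x + 1) * y <= (1 + eps) * (x * y).
Proof. intros Hx Hex Hy. split; nra. Qed.

Lemma eventually_inv_le (eps : R) : 0 < eps ->
  exists N : nat, (0 < N)%nat /\ forall i : nat, (N <= i)%nat -> 1 <= eps * INR i.
Proof.
  intros Heps. destruct (archimed_cor1 eps Heps) as [N [HN HN0]].
  exists N. split; [exact HN0 |]. intros i Hi.
  assert (HNp : 0 < INR N) by (apply lt_0_INR; exact HN0).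
  assert (INR N <= INR i) by (apply le_INR; exact Hi).
  assert (1 < eps * INR N).
  { apply (Rmult_lt_compat_r (INR N)) in HN; [| exact HNp].
    rewrite Rinv_l in HN; lra. }
  nra.
Qed.

Theorem lemma11 (eps : R) (Heps : 0 < eps) :
  exists i0 : nat, (0 < i0)%nat /\
    (forall i j : nat, (i0 <= i)%nat -> (i < j)%nat ->
       (1 - eps) * (Rdiv (INR i * (INR j - INR i)) (INR j)) <= Dmn i j /\
       Dmn i j <= (1 + eps) * (Rdiv (INR i * (INR j - INR i)) (INR j))) /\
    (forall i : nat, (i0 <= i)%nat ->
       Rbar_le (Finite ((1 - eps) * INR i)) (Dlim i) /\
       Rbar_le (Dlim i) (Finite ((1 + eps) * INR i))).
Proof.
  destruct (eventually_inv_le eps Heps) as [N [HN0 HN]].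
  exists N. split; [exact HN0 |]. split.
  - intros i j Hi Hij.
    assert (Hi0 : 0 < INR i) by (apply lt_0_INR; lia).
    assert (Hj0 : 0 < INR j) by (apply lt_0_INR; lia).
    assert (INR i < INR j) by (apply lt_INR; exact Hij).
    assert (Hy : 0 <= (INR j - INR i) / INR j)
      by (apply Rlt_le, Rdiv_lt_0_compat; lra).
    destruct (succ_mult_within eps _ _ Hi0 (HN i Hi) Hy) as [Hlo Hhi].
    rewrite Dmn_closed by lia. unfold Rdiv in *.
    rewrite !Rmult_assoc. split; assumption.
  - intros i Hi.
    assert (Hi0 : 0 < INR i) by (apply lt_0_INR; lia).
    destruct (succ_mult_within eps _ 1 Hi0 (HN i Hi) Rle_0_1) as [Hlo Hhi].
    rewrite Dlim_closed by lia. rewrite !Rmult_1_r in Hlo, Hhi.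
    split; assumption.
Qed.
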